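(* Let $G\subset\operatorname{SL}(n,\mathbb{k})$ be a finite abelian subgroup and let $\mathscr{E}=(E_\rho:\rho\in G^* )$ be the collection of modules of semi-invariants on $X=\mathbb{A}^n_{\mathbb{k}}/G$. Then the toric algebra $A_{\mathscr{E}}$ is consistent, i.e. $J_W=J_{\mathscr{E}}$.
   Context: $\mathbb{k}$ is an algebraically closed field whose characteristic does not divide $|G|$; $G$ is taken to consist of diagonal matrices, and $\rho_i\in G^*=\operatorname{Hom}(G,\mathbb{k}^\times)$ is the $i$-th diagonal entry. $G$ acts on $\mathbb{k}[x_1,\dots,x_n]$ with $x_i$ of weight $\rho_i$; $R=\mathbb{k}[x_1,\dots,x_n]^G$, $X=\operatorname{Spec}R$ (a Gorenstein affine toric variety with Cox ring $\mathbb{k}[x_1,\dots,x_n]$ and $\operatorname{Cl}(X)\cong G^*$), and $E_\rho$ is the $R$-module spanned by semi-invariant polynomials of weight $\rho$ ($E_{1}=R$). The quiver of sections of $\mathscr{E}$ is the McKay quiver $Q$: vertices $G^*$ and arrows $a_i^\rho:\rho\to\rho\rho_i$ with label monomial $x_i$, for $\rho\in G^*$, $1\le i\le n$ (paths composed right to left; the label of a path is the product of labels of its arrows). $J_{\mathscr{E}}$ is the two-sided ideal of $\mathbb{k}Q$ generated by $p^+-p^-$ for all pairs of paths with equal head, tail and label monomial; it is generated by $a_i^{\rho\rho_j}a_j^\rho-a_j^{\rho\rho_i}a_i^\rho$. A cycle is anticanonical if its label is $x_1x_2\cdots x_n$. For a path $q$, $\partial_qW$ is the sum of all paths $p$ with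 $pq$ an anticanonical cycle; $\mathscr{P}$ is the set of paths $q$ with $\partial_qW$ a sum of precisely two paths sharing neither initial nor final arrow; $J_W$ is generated by $p^+-p^-$ whenever $\partial_qW=p^++p^-$ with $q\in\mathscr{P}$. Consistency means $J_W=J_{\mathscr{E}}$. *)

From HB Require Import structures.
From mathcomp Require Import all_boot all_order all_algebra all_fingroup.
Set Implicit Arguments. Unset Strict Implicit. Unset Printing Implicit Defensive.
Import GRing.Theory.
Local Open Scope ring_scope.

(* The finite abelian group G is given abstractly as a finGroupType gT together
   with its n diagonal characters rho_i : gT -> k; the embedding
   g |-> diag(rho_1 g, ..., rho_n g) identifies gT with G. *)

Section McKay.
Variables (k : closedFieldType) (n : nat) (gT : finGroupType).
Variable rho : 'I_n -> gT -> k.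

Definition is_char (chi : gT -> k) : Prop :=
  (forall g h : gT, chi (g * h)%g = chi g * chi h) /\ chi 1%g = 1.

(* A mpath of the McKay quiver: its tail vertex (a character) and the sequence
   of arrow indices in traversal order; the arrow a_i^chi : chi -> chi rho_i. *)
Definition mpath : Type := ({ffun gT -> k} * seq 'I_n)%type.

Definition is_path (p : mpath) : Prop := is_char p.1.

Definition ptail (p : mpath) : {ffun gT -> k} := p.1.

Definition phead (p : mpath) : {ffun gT -> k} :=
  [ffun g => p.1 g * \prod_(i <- p.2) rho i g].

(* Composition a b = "a after b" (right-to-left), None if not composable. *)
Definition pcomp (a b : mpath) : option mpath :=
  if phead b == ptail a then Some (b.1, b.2 ++ a.2) else None.

(* Same label monomial <=> same multiset of arrow indices. *)
Definition same_label (p q : mpath) : bool := perm_eq p.2 q.2.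

(* Elements of the mpath algebra kQ are finitely supported coefficient
   functions mpath -> k. The two-sided ideal generated by {p - q | R p q}
   consists of the finite sums  sum_j c_j * u_j (p_j - q_j) v_j  with u_j, v_j
   paths of Q (the paths span kQ). *)
Definition term_val (t : k * mpath * (mpath * mpath) * mpath) (x : mpath) : k :=
  let: (c, u, (p, q), v) := t in
  c * ((match pcomp p v with Some pv => pcomp u pv == Some x | None => false end)%:R
     - (match pcomp q v with Some qv => pcomp u qv == Some x | None => false end)%:R).

Definition in_ideal (R : mpath -> mpath -> Prop) (f : mpath -> k) : Prop :=
  exists s : seq (k * mpath * (mpath * mpath) * mpath),
    (forall t, t \in s -> let: (c, u, (p, q), v) := t in
                          [/\ is_path u, is_path v & R p q]) /\
    (forall x, f x = \sum_(t <- s) term_val t x).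

Definition RE (p q : mpath) : Prop :=
  [/\ is_path p, is_path q, ptail p = ptail q, phead p = phead q
    & same_label p q].

Definition anticanonical_cycle (c : mpath) : Prop :=
  is_path c /\ phead c = ptail c /\ perm_eq c.2 (enum 'I_n).

(* p is a summand of \partial_q W: p q is an anticanonical cycle. *)
Definition dW (q p : mpath) : Prop :=
  exists c, pcomp p q = Some c /\ anticanonical_cycle c.

(* Generators of J_W: \partial_q W = p+ + p- with q in the set P, i.e. exactly
   two such paths, sharing neither initial nor final arrow. *)
Definition RW (pp pm : mpath) : Prop :=
  exists q : mpath,
    [/\ is_path q,
        (forall p, dW q p <-> p = pp \/ p = pm),
        pp <> pm,
        ohead pp.2 != ohead pm.2
      & ohead (rev pp.2) != ohead (rev pm.2)].

End McKay.

From Pilot Require Import Defs.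
From HB Require Import structures.
From mathcomp Require Import all_boot all_order all_algebra all_fingroup.
Import GRing.Theory.
Local Open Scope ring_scope.

(* If p and q
   both complete a path r to an anticanonical cycle, they start at the head of
   r and carry the complementary label, hence also end at the same vertex:
   J_W is contained in J_E.  Conversely, for distinct indices i, j the path q
   made of the remaining n - 2 arrows has  d_q W = a_j a_i + a_i a_j, so J_W
   contains every commutation relation.  Two paths with the same tail and label
   differ by a permutation of their arrows, i.e. by a chain of adjacent
   transpositions, each of which is a commutation relation in context; hence
   J_E is contained in J_W. *)

Lemma perm_eq_pair (T : eqType) (s : seq T) i j :
  perm_eq s [:: i; j] -> s = [:: i; j] \/ s = [:: j; i].
Proof.
move=> st; have /perm_size := st; case: s st => [|a [|b []]] //= st _.
have : a \in [:: i; j] by rewrite -(perm_mem st) mem_head.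
rewrite !inE => /orP[] /eqP ea; subst a; [left | right].
  by move: st; rewrite perm_cons => /perm_small_eq ->.
have : perm_eq [:: j; b] [:: j; i].
  by rewrite (perm_trans st) // (perm_catC [:: i]).
by rewrite perm_cons => /perm_small_eq ->.
Qed.

Section McKayQuiver.
Context {k : closedFieldType} {n : nat} {gT : finGroupType}.
Context {rho : 'I_n -> gT -> k}.

Local Notation mp := (mpath k n gT).

Definition pdiff (chi : {ffun gT -> k}) (s t : seq 'I_n) (x : mp) : k :=
  ((chi, s) == x)%:R - ((chi, t) == x)%:R.

Section Ideal.
Context {R : mp -> mp -> Prop}.

Lemma in_ideal_ext {f g : mp -> k} :
  f =1 g -> in_ideal rho R f -> in_ideal rho R g.
Proof. by move=> fg [s [Hs Hf]]; exists s; split => // x; rewrite -fg. Qed.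

Lemma in_ideal0 : in_ideal rho R (fun=> 0).
Proof. by exists [::]; split => // x; rewrite big_nil. Qed.

Lemma in_idealD {f g : mp -> k} : in_ideal rho R f -> in_ideal rho R g ->
  in_ideal rho R (fun x => f x + g x).
Proof.
move=> [s [Hs Hf]] [t [Ht Hg]]; exists (s ++ t); split.
  by move=> u; rewrite mem_cat => /orP[/Hs|/Ht].
by move=> x; rewrite big_cat Hf Hg.
Qed.

Lemma in_idealZ c {f : mp -> k} :
  in_ideal rho R f -> in_ideal rho R (fun x => c * f x).
Proof.
move=> [s [Hs Hf]].
exists [seq let: (c0, u, pq, v) := t in (c * c0, u, pq, v) | t <- s]; split.
  by move=> t /mapP [[[[c0 u] [p q]] v] /Hs ? ->].
move=> x; rewrite Hf big_map mulr_sumr; apply: eq_bigr => -[[[c0 u] [p q]] v] _.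
by rewrite /term_val mulrA.
Qed.

Lemma in_ideal_term c u p q v : is_path u -> is_path v -> R p q ->
  in_ideal rho R (term_val rho (c, u, (p, q), v)).
Proof.
move=> u_path v_path Rpq; exists [:: (c, u, (p, q), v)].
by split=> [t /[1!inE] /eqP -> | x]; rewrite ?big_seq1.
Qed.

Lemma in_ideal_pdiffxx (chi : {ffun gT -> k}) (s : seq 'I_n) :
  in_ideal rho R (pdiff chi s s).
Proof. by apply: in_ideal_ext in_ideal0 => x; rewrite /pdiff subrr. Qed.

Lemma in_ideal_pdiff_trans (chi : {ffun gT -> k}) (s t u : seq 'I_n) :
  in_ideal rho R (pdiff chi s t) -> in_ideal rho R (pdiff chi t u) ->
  in_ideal rho R (pdiff chi s u).
Proof.
move=> Jst Jtu; apply: in_ideal_ext (in_idealD Jst Jtu) => x.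
by rewrite /pdiff addrA subrK.
Qed.

End Ideal.

Lemma in_ideal_trans (R R' : mp -> mp -> Prop) f :
  (forall c u p q v, is_path u -> is_path v -> R p q ->
     in_ideal rho R' (term_val rho (c, u, (p, q), v))) ->
  in_ideal rho R f -> in_ideal rho R' f.
Proof.
move=> RR' [s [Hs Hf]]; apply: in_ideal_ext (fun x => esym (Hf x)) _.
elim: s Hs {Hf} => [|t s IHs] Hs.
  by apply: in_ideal_ext in_ideal0 => x; rewrite big_nil.
have Jt : in_ideal rho R' (term_val rho t).
  by case: t Hs => [[[c u] [p q]] v] /(_ _ (mem_head _ _)) [? ? ?]; apply: RR'.
have Js : in_ideal rho R' (fun x => \sum_(t <- s) term_val rho t x).
  by apply: IHs => t' ts; apply: Hs; rewrite inE ts orbT.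
by apply: in_ideal_ext (in_idealD Jt Js) => x; rewrite big_cons.
Qed.

Section Relations.
Hypothesis rho_char : forall i, is_char (rho i).

Lemma phead_cat (c : {ffun gT -> k}) s t :
  phead rho (phead rho (c, s), t) = phead rho (c, s ++ t).
Proof. by apply/ffunP => g; rewrite !ffunE /= big_cat mulrA. Qed.

Lemma phead_perm (c : {ffun gT -> k}) s t : perm_eq s t ->
  phead rho (c, s) = phead rho (c, t).
Proof. by move=> st; apply/ffunP => g; rewrite !ffunE /= (perm_big _ st). Qed.

Lemma is_char_phead (c : {ffun gT -> k}) s :
  is_char c -> is_char (phead rho (c, s)).
Proof.
have rhoM g h i : rho i (g * h)%g = rho i g * rho i h by case: (rho_char i).
case=> cM c1; split => [g h|]; rewrite !ffunE /=.
  by rewrite cM (eq_bigr _ (fun i _ => rhoM g h i)) big_split /= mulrACA.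
by rewrite c1 mul1r big1_seq // => i _; case: (rho_char i).
Qed.

Hypothesis rho_det : forall g : gT, \prod_(i < n) rho i g = 1.

Lemma phead_enum (c : {ffun gT -> k}) s : perm_eq s (enum 'I_n) ->
  phead rho (c, s) = c.
Proof.
move=> st; apply/ffunP => g; rewrite ffunE /= (perm_big _ st).
by rewrite big_enum /= rho_det mulr1.
Qed.

Lemma dW_iff q p : is_path q ->
  dW rho q p <-> p.1 = phead rho q /\ perm_eq (q.2 ++ p.2) (enum 'I_n).
Proof.
move=> q_path; rewrite /dW /Defs.pcomp /ptail; split.
  by case=> c []; case: (phead rho q =P p.1) => [<- [<-] [_ []] | //].
case=> p1 full; exists (q.1, q.2 ++ p.2); rewrite p1 eqxx.
by do !split => //; rewrite /ptail phead_enum.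
Qed.

Lemma RW_RE p q : RW rho p q -> RE rho p q.
Proof.
case=> q0 [q0_path dWq _ _ _].
have [[tp lp] [tq lq]] :
    (p.1 = phead rho q0 /\ perm_eq (q0.2 ++ p.2) (enum 'I_n)) /\
    (q.1 = phead rho q0 /\ perm_eq (q0.2 ++ q.2) (enum 'I_n)).
  by split; apply/dW_iff/dWq => //; [left | right].
have lab : perm_eq p.2 q.2.
  by rewrite -(perm_cat2l q0.2) (perm_trans lp) // perm_sym.
case: p q tp tq lab {lp lq dWq} => [cp sp] [cq sq] /= -> -> lab.
by split; rewrite /is_path //=; [exact: is_char_phead.. | exact: phead_perm].
Qed.

Lemma RW_commute (h : {ffun gT -> k}) i j : is_char h -> i != j ->
  RW rho (h, [:: j; i]) (h, [:: i; j]).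
Proof.
move=> h_char ij.
pose r := [seq l <- enum 'I_n | predC (mem [:: i; j]) l].
have full : perm_eq ([:: i; j] ++ r) (enum 'I_n).
  rewrite perm_sym -(perm_filterC (mem [:: i; j])) perm_cat2r.
  apply: uniq_perm => [|/=|l]; first by rewrite filter_uniq // enum_uniq.
    by rewrite inE ij.
  by rewrite mem_filter mem_enum andbT.
pose q := (phead rho (h, [:: i; j]), r).
have head_q : phead rho q = h by rewrite phead_cat phead_enum.
exists q; split => //=; first exact: is_char_phead.
- move=> [c s]; apply: iff_trans (dW_iff q (c, s) (is_char_phead _ _ h_char)) _.
  rewrite /= head_q perm_sym -(permPl full) perm_catC perm_cat2l perm_sym.
  split=> [[-> /perm_eq_pair [] ->] | [] [-> ->]]; [by right | by left | | by []].
  by split; rewrite // (perm_catC [:: j]).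
- by case=> /eqP; rewrite eq_sym (negbTE ij).
- by rewrite eq_sym.
Qed.

Local Notation JW := (in_ideal rho (RW rho)).

Lemma JW_pdiff_swap (chi : {ffun gT -> k}) (w r : seq 'I_n) (i j : 'I_n) :
  is_char chi ->
  JW (pdiff chi (w ++ j :: i :: r) (w ++ i :: j :: r)).
Proof.
move=> chi_char; have [<-|ij] := eqVneq i j; first exact: in_ideal_pdiffxx.
pose u : mp := (phead rho (chi, w ++ [:: j; i]), r).
have := in_ideal_term 1 u _ _ (chi, w) (is_char_phead _ _ chi_char) chi_char
  (RW_commute _ _ _ (is_char_phead _ w chi_char) ij).
have swap_head :
    phead rho (chi, w ++ [:: i; j]) = phead rho (chi, w ++ [:: j; i]).
  by apply: phead_perm; rewrite perm_cat2l (perm_catC [:: i]).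
apply: in_ideal_ext => x.
rewrite /term_val /Defs.pcomp /ptail /= !eqxx swap_head eqxx.
by rewrite mul1r /pdiff -!catA.
Qed.

Lemma JW_pdiff_move (chi : {ffun gT -> k}) (a : 'I_n) (t1 t2 w : seq 'I_n) :
  is_char chi ->
  JW (pdiff chi (w ++ a :: t1 ++ t2) (w ++ t1 ++ a :: t2)).
Proof.
move=> chi_char; elim: t1 w => [|b t1 IHt1] w; first exact: in_ideal_pdiffxx.
apply: (in_ideal_pdiff_trans _ _ (w ++ b :: a :: t1 ++ t2)).
  exact: JW_pdiff_swap.
by have := IHt1 (rcons w b); rewrite -!cats1 -!catA.
Qed.

Lemma JW_pdiff_perm (chi : {ffun gT -> k}) (s t w : seq 'I_n) :
  is_char chi -> perm_eq s t ->
  JW (pdiff chi (w ++ s) (w ++ t)).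
Proof.
move=> chi_char; elim: s t w => [|a s IHs] t w st.
  by move: st; rewrite perm_sym => /perm_nilP ->; apply: in_ideal_pdiffxx.
have a_t : a \in t by rewrite -(perm_mem st) mem_head.
move: st; case/splitPr: a_t => t1 t2 st.
have st' : perm_eq s (t1 ++ t2).
  by rewrite -(perm_cons a) (perm_trans st) // (perm_catCA t1 [:: a] t2).
apply: (in_ideal_pdiff_trans _ _ (w ++ a :: t1 ++ t2)); last exact: JW_pdiff_move.
by have := IHs _ (rcons w a) st'; rewrite -!cats1 -!catA.
Qed.

Lemma JW_term_RE c u p q v : is_path u -> is_path v -> RE rho p q ->
  JW (term_val rho (c, u, (p, q), v)).
Proof.
move=> u_path v_path [_ _ tpq _ lpq]; rewrite /term_val /Defs.pcomp -tpq.
case: eqP => _; last by apply: in_ideal_ext in_ideal0 => x; rewrite subrr mulr0.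
have -> : phead rho (v.1, v.2 ++ q.2) = phead rho (v.1, v.2 ++ p.2).
  by apply: phead_perm; rewrite perm_cat2l perm_sym.
case: eqP => _; last by apply: in_ideal_ext in_ideal0 => x; rewrite subrr mulr0.
have lab : perm_eq (p.2 ++ u.2) (q.2 ++ u.2) by rewrite perm_cat2r.
apply: in_ideal_ext (in_idealZ c (JW_pdiff_perm _ _ _ v.2 v_path lab)) => x.
by rewrite /pdiff -!catA.
Qed.

End Relations.
End McKayQuiver.

Theorem proposition4p2 (k : closedFieldType) (n : nat) (gT : finGroupType)
    (rho : 'I_n -> gT -> k) :
  abelian [set: gT] ->
  (#|gT|%:R : k) != 0 ->
  (forall i, is_char (rho i)) ->
  (forall g : gT, \prod_(i < n) rho i g = 1) ->
  (forall g : gT, (forall i, rho i g = 1) -> g = 1%g) ->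
  forall f : mpath k n gT -> k,
    in_ideal rho (RW rho) f <-> in_ideal rho (RE rho) f.
Proof.
move=> _ _ rho_char rho_det _ f.
split; apply: in_ideal_trans => c u p q v u_path v_path.
  by move=> /(RW_RE rho_char rho_det); apply: in_ideal_term.
exact: JW_term_RE.
Qed.
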